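(* For all positive integers $m,n$, $$\sum_{\substack{w\in W_n\\ |w|\in[m]^n}}t^{\mathrm{bars}(w)}=\sum_{k=0}^{n-1}\binom{n-1}{k}t^k\sum_{u\in[m]^{n-k}}t^{\mathrm{des}(u)}.$$
   Context: A barred word of length $n$ over $\mathbb P$ is a word $w_1\cdots w_n$ of positive integers in which some letters carry a bar; $|w_i|$ is the letter without its bar, $|w|=|w_1|\cdots|w_n|$, and $\mathrm{bars}(w)$ is the number of barred letters. $W_n$ (banners) is the set of barred words of length $n$ such that (1) $w_n$ is unbarred, (2) for $i\in[n-1]$, if $|w_i|<|w_{i+1}|$ then $w_i$ is unbarred, (3) for $i\in[n-1]$, if $|w_i|>|w_{i+1}|$ then $w_i$ is barred. For a word $u$, $\mathrm{des}(u)=|\{i:u_i>u_{i+1}\}|$. $[m]=\{1,\dots,m\}$. *)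

From HB Require Import structures.
From mathcomp Require Import all_boot all_order all_algebra.
Set Implicit Arguments. Unset Strict Implicit. Unset Printing Implicit Defensive.
Import Order.TTheory GRing.Theory Num.Theory.

(* A barred word of length n with letters in [m] is encoded as a finite
   function w : 'I_n -> 'I_m * bool.  Position i (0-based) carries the letter
   |w_{i+1}| = val (w i).1 + 1 in [m] = {1,..,m}, and (w i).2 = true iff that
   letter is barred. *)
Definition bword (n m : nat) := {ffun 'I_n -> 'I_m * bool}.

Definition bw_letters n m (w : bword n m) : seq nat :=
  [seq (val (w i).1).+1 | i <- enum 'I_n].

Definition bw_bars n m (w : bword n m) : seq bool :=
  [seq (w i).2 | i <- enum 'I_n].

Definition bars n m (w : bword n m) : nat := count id (bw_bars w).

(* w is a banner (w in W_n):
   (1) w_n unbarred; (2) |w_i| < |w_{i+1}| -> w_i unbarred;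
   (3) |w_i| > |w_{i+1}| -> w_i barred   (0-based indices i < n-1 below). *)
Definition is_banner n m (w : bword n m) : bool :=
  let a := bw_letters w in
  let b := bw_bars w in
  [&& ~~ last false b,
      all (fun i => (nth 0 a i < nth 0 a i.+1) ==> ~~ nth false b i) (iota 0 n.-1)
    & all (fun i => (nth 0 a i.+1 < nth 0 a i) ==> nth false b i) (iota 0 n.-1)].

Definition word_letters k m (u : {ffun 'I_k -> 'I_m}) : seq nat :=
  [seq (val (u i)).+1 | i <- enum 'I_k].

Definition des k m (u : {ffun 'I_k -> 'I_m}) : nat :=
  let a := word_letters u in
  count (fun i => nth 0 a i.+1 < nth 0 a i) (iota 0 k.-1).

From HB Require Import structures.
From mathcomp Require Import all_boot all_order all_algebra.
Import GRing.Theory.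
Set Implicit Arguments. Unset Strict Implicit. Unset Printing Implicit Defensive.
Local Open Scope ring_scope.

(* Proof strategy (transfer matrices).  For a weight W on pairs of letters,
   let P_W(k, c) be the sum, over the words c s_1 ... s_k, of the products of
   W along consecutive letters.  Then:
   - descents:  t^des(c s) is the W-product for W_des c y = t^[y < c];
   - banners:   summing t^bars over the banner barrings of a fixed letter word
     c s gives the product of W_ban = W_des + t * [y = c] (letters that go up
     or down force the bar, equal neighbours leave it free, the last letter
     is unbarred);
   - binomial theorem:  since the diagonal part t * [y = c] commutes with
     everything, P_(W + t.Id)(k, c) = sum_j C(k, j) t^j P_W(k - j, c). *)

Definition wordsum (R : nmodType) (T : finType) n (F : seq T -> R) : R :=
  \sum_(w : {ffun 'I_n -> T}) F (codom w).

Lemma wordsum0 (R : nmodType) (T : finType) (F : seq T -> R) :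
  wordsum 0 F = F [::].
Proof.
rewrite /wordsum (eq_bigr (fun _ => F [::])); last first.
  by move=> w _; rewrite /codom /image_mem enum_ord0.
by rewrite sumr_const card_ffun card_ord expn0.
Qed.

Lemma wordsumS (R : nmodType) (T : finType) n (F : seq T -> R) :
  wordsum n.+1 F = \sum_(x : T) wordsum n (fun s => F (x :: s)).
Proof.
pose cons_w (p : T * {ffun 'I_n -> T}) : {ffun 'I_n.+1 -> T} :=
  [ffun i => if unlift ord0 i is Some j then p.2 j else p.1].
pose split_w (w : {ffun 'I_n.+1 -> T}) := (w ord0, [ffun j => w (lift ord0 j)]).
have consK : cancel cons_w split_w.
  move=> [x f]; rewrite /split_w /cons_w /= ffunE unlift_none; congr (_, _).
  by apply/ffunP => j; rewrite !ffunE liftK.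
have splitK : cancel split_w cons_w.
  move=> w; apply/ffunP => i; rewrite /split_w /cons_w ffunE /=.
  by case: unliftP => [j ->|->]; rewrite ?ffunE.
rewrite /wordsum (reindex cons_w); last by exists split_w => ? _.
rewrite pair_bigA /=; apply: eq_bigr => -[x f] _ /=; congr F.
rewrite /codom /image_mem enum_ordSl /= ffunE unlift_none; congr (_ :: _).
by rewrite -map_comp; apply: eq_map => j /=; rewrite ffunE liftK.
Qed.

Lemma binomial_pascal (R : comRingType) (a : R) (f : nat -> R) k :
  \sum_(j < k.+2) 'C(k.+1, j)%:R * a ^+ j * f j =
  \sum_(j < k.+1) 'C(k, j)%:R * a ^+ j * (f j + a * f j.+1).
Proof.
rewrite big_ord_recl bin0 expr0 !mul1r.
under eq_bigr do rewrite lift0 binS natrD !mulrDl.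
under [RHS]eq_bigr do rewrite mulrDr.
rewrite !big_split /= addrA; congr (_ + _); last first.
  by apply: eq_bigr => j _; rewrite exprSr !mulrA.
rewrite [in RHS]big_ord_recl bin0 expr0 mul1r big_ord_recr /= bin_small //.
by rewrite mul0r mul0r addr0 mul1r.
Qed.

Section PathSums.
Variables (R : comRingType) (T : finType).
Implicit Types (W : T -> T -> R) (x y : T) (s : seq T).

Fixpoint pathw W x s : R :=
  if s is y :: s' then W x y * pathw W y s' else 1.

Definition pathsum W k x : R := wordsum k (pathw W x).

Lemma pathsumS W k x : pathsum W k.+1 x = \sum_y W x y * pathsum W k y.
Proof. by rewrite /pathsum wordsumS; apply: eq_bigr => y _; rewrite mulr_sumr. Qed.

Lemma pathsum_rec W (F : nat -> T -> R) :
  (forall x, F 0%N x = 1) -> (forall k x, F k.+1 x = \sum_y W x y * F k y) ->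
  forall k x, F k x = pathsum W k x.
Proof.
move=> F0 FS; elim=> [|k IH] x; first by rewrite F0 /pathsum wordsum0.
by rewrite FS pathsumS; apply: eq_bigr => y _; rewrite IH.
Qed.

Lemma pathsum_shift W (a : R) k x :
  pathsum (fun x y => W x y + a * (y == x)%:R) k x =
  \sum_(j < k.+1) 'C(k, j)%:R * a ^+ j * pathsum W (k - j) x.
Proof.
symmetry; move: k x; apply: pathsum_rec => [x|k x].
  by rewrite big_ord1 expr0 mulr1 /pathsum wordsum0 /= mulr1.
rewrite (binomial_pascal a (fun j => pathsum W (k.+1 - j) x)) /=.
under [RHS]eq_bigr => y _ do rewrite mulrDl mulr_sumr.
rewrite big_split /= [X in _ + X](bigD1 x) //= eqxx mulr1.
rewrite [X in _ + (_ + X)]big1 ?addr0; last first.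
  by move=> y /negbTE ->; rewrite mulr0 mul0r.
rewrite exchange_big /= mulr_sumr -big_split /=.
apply: eq_bigr => j _; have jk : (j <= k)%N by rewrite -ltnS.
rewrite subSS (subSn jk) pathsumS mulrDr mulr_sumr.
by congr (_ + _); [apply: eq_bigr => y _; rewrite mulrCA | rewrite mulrCA].
Qed.

End PathSums.

Section Descents.
Variables (R : comRingType) (t : R) (m : nat).

Definition descw (x y : 'I_m) : R := t ^+ (y < x)%N.

Definition desc_seq (s : seq 'I_m) : nat :=
  let a := [seq (val x).+1 | x <- s] in
  count (fun i => nth 0 a i.+1 < nth 0 a i)%N (iota 0 (size s).-1).

Lemma des_codom k (u : {ffun 'I_k -> 'I_m}) : des u = desc_seq (codom u).
Proof.
by rewrite /des /desc_seq /word_letters /codom /image_mem size_map size_enum_ord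
  -!map_comp.
Qed.

Lemma desc_seq_cons2 (x y : 'I_m) s :
  desc_seq [:: x, y & s] = ((y < x)%N + desc_seq (y :: s))%N.
Proof. by rewrite /desc_seq /= (iotaDl 1 0) count_map ltnS. Qed.

Lemma desc_pathw (c : 'I_m) s : t ^+ desc_seq (c :: s) = pathw descw c s.
Proof.
elim: s c => [|y s IH] c //=.
by rewrite desc_seq_cons2 exprD IH.
Qed.

Lemma descent_poly k :
  \sum_(u : {ffun 'I_k.+1 -> 'I_m}) t ^+ des u = \sum_c pathsum descw k c.
Proof.
under eq_bigr do rewrite des_codom.
rewrite -[LHS]/(wordsum k.+1 (fun s => t ^+ desc_seq s)) wordsumS.
by apply: eq_bigr => c _; apply: eq_bigr => u _; rewrite desc_pathw.
Qed.

End Descents.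
(* The alphabet size is inferred, so that descw t is a weight on letters. *)
Arguments descw {R} t {m}.

Section Banners.
Variables (R : comRingType) (t : R) (m : nat).
Implicit Types (x y : 'I_m * bool) (s : seq ('I_m * bool)).

Definition bar_compatible x y : bool :=
  ((x.1 < y.1)%N ==> ~~ x.2) && ((y.1 < x.1)%N ==> x.2).

Fixpoint banner_seq s : bool :=
  if s is x :: s' then
    if s' is y :: _ then bar_compatible x y && banner_seq s' else ~~ x.2
  else true.

Lemma is_banner_codom n (w : bword n m) : is_banner w = banner_seq (codom w).
Proof.
rewrite /is_banner /bw_letters /bw_bars.
have -> : n.-1 = (size (codom w)).-1 by rewrite size_codom card_ord.
rewrite /codom /image_mem.
rewrite (map_comp (fun p => (val p.1).+1) w) (map_comp snd w).
elim: (map w _) => [|x s IH] //; case: s IH => [|y s] IH; first by rewrite /= andbT.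
rewrite -[banner_seq _]/(bar_compatible x y && banner_seq (y :: s)) -IH /=.
rewrite (iotaDl 1 0) !all_map /bar_compatible /= !ltnS.
by case: (x.1 < y.1)%N; case: (y.1 < x.1)%N; case: x.2; rewrite /= ?andbF ?andbT.
Qed.

Lemma bars_codom n (w : bword n m) : bars w = count snd (codom w).
Proof. by rewrite /bars /bw_bars /codom /image_mem !count_map. Qed.

Definition bannersum k x : R :=
  wordsum k (fun s => if banner_seq (x :: s) then t ^+ count snd (x :: s) else 0).

Lemma bannersum0 x : bannersum 0 x = if x.2 then 0 else 1.
Proof. by rewrite /bannersum wordsum0 /=; case: x.2. Qed.

Lemma bannersumS k x :
  bannersum k.+1 x =
  \sum_y (if bar_compatible x y then t ^+ x.2 * bannersum k y else 0).
Proof.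
rewrite /bannersum wordsumS; apply: eq_bigr => y _; rewrite /wordsum.
case: ifP => compat; last by rewrite big1 // => w _; rewrite /= compat.
rewrite mulr_sumr; apply: eq_bigr => w _; rewrite [banner_seq _]/= compat /=.
by case: ifP; rewrite ?mulr0 // exprD.
Qed.

(* Letter-level transfer weight of banners: descents weighted by t, plus a
   free bar between equal letters. *)
Definition bannerw (c d : 'I_m) : R := descw t c d + t * (d == c)%:R.

(* Barring a letter c followed by a letter d is forced if d <> c (barred
   exactly when d < c) and free if d = c. *)
Lemma bar_choice (c d : 'I_m) (b' : bool) :
  \sum_(b : bool) (if bar_compatible (c, b) (d, b') then t ^+ b else 0) =
  bannerw c d.
Proof.
rewrite big_bool /bar_compatible /bannerw /descw /=.
have -> : (d == c) = (val d == val c) by [].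
by case: ltngtP => _; rewrite /= ?mulr0 ?mulr1 ?addr0 ?add0r ?expr0 ?expr1 // addrC.
Qed.

Lemma bannersum_pathsum k (c : 'I_m) :
  \sum_(b : bool) bannersum k (c, b) = pathsum bannerw k c.
Proof.
move: k c; apply: pathsum_rec => [c|k c].
  by rewrite big_bool !bannersum0 /= add0r.
under eq_bigr do rewrite bannersumS.
under [RHS]eq_bigr do rewrite mulr_sumr.
rewrite exchange_big [RHS]pair_bigA /=; apply: eq_bigr => -[d b'] _.
rewrite -(bar_choice c d b') mulr_suml.
by apply: eq_bigr => b _; case: ifP; rewrite ?mul0r.
Qed.

Lemma banner_poly_pathsum k :
  \sum_(w : bword k.+1 m | is_banner w) t ^+ bars w = \sum_c pathsum bannerw k c.
Proof.
rewrite big_mkcond /=.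
under eq_bigr do rewrite is_banner_codom bars_codom.
rewrite -[LHS]/(wordsum k.+1 (fun s => if banner_seq s then t ^+ count snd s else 0)).
under [RHS]eq_bigr do rewrite -bannersum_pathsum.
by rewrite wordsumS [RHS]pair_bigA; apply: eq_bigr => -[c b].
Qed.

(* The binomial theorem for the transfer weight bannerw = descw + t.Id. *)
Lemma banner_poly k :
  \sum_(w : bword k.+1 m | is_banner w) t ^+ bars w =
  \sum_(j < k.+1) 'C(k, j)%:R * t ^+ j * \sum_(c : 'I_m) pathsum (descw t) (k - j) c.
Proof.
rewrite banner_poly_pathsum.
under [RHS]eq_bigr do rewrite mulr_sumr.
by rewrite [RHS]exchange_big; apply: eq_bigr => c _; apply: pathsum_shift.
Qed.

End Banners.

Theorem mainTheorem17 (m n : nat) (hm : (0 < m)%N) (hn : (0 < n)%N) :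
  (\sum_(w : bword n m | is_banner w) 'X ^+ (bars w) : {poly int})
  = \sum_(k < n) ('C(n.-1, k))%:R * 'X ^+ k *
        \sum_(u : {ffun 'I_(n - k) -> 'I_m}) 'X ^+ (des u).
Proof.
case: n hn => // n _ /=.
rewrite banner_poly; apply: eq_bigr => j _.
have jn : (j <= n)%N by rewrite -ltnS.
by rewrite (subSn jn) descent_poly.
Qed.
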